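(* Let $(\mathcal C,\otimes,\mathbb I)$ be a monoidal category with pushouts and $(H,\Delta,\varepsilon)$ a coalgebra in $\mathcal C$. Let $(X,X\bullet H,\pi_X,\rho_X)$ be a geometric partial $H$-comodule, and consider the parallel comodule morphisms $\rho_X\otimes H,\ (\pi_X\otimes H)\circ(X\otimes\Delta):(X\otimes H,X\otimes\Delta)\to((X\bullet H)\otimes H,(X\bullet H)\otimes\Delta)$. Let $(Y,\delta)$ be a global $H$-comodule. Then the maps $$g\mapsto (g\otimes H)\circ\delta,\qquad f\mapsto (X\otimes\varepsilon)\circ f$$ are mutually inverse bijections between $\mathrm{Hom}_{\mathsf{PCom}^H}(\mathcal I(Y),X)$ and the set of comodule morphisms $f\in\mathrm{Hom}_{\mathsf{Com}^H}(Y,X\otimes H)$ satisfying $(\rho_X\otimes H)\circ f=(\pi_X\otimes H)\circ(X\otimes\Delta)\circ f$. This correspondence is natural in both $Y$ and $X$.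
   Context: $\mathcal C$ is treated as strict monoidal; the identity of an object $X$ is also written $X$. $\mathsf{Com}^H$ is the category of right $H$-comodules $(Y,\delta)$. A partial comodule datum is $(X,X\bullet H,\pi_X,\rho_X)$ with $\rho_X:X\to X\bullet H$ and $\pi_X:X\otimes H\to X\bullet H$ an epimorphism. For such a datum let: $(X\bullet H)\bullet H$ be the pushout of $\pi_X$ and $\rho_X\otimes H$, with coprojections $\rho_X\bullet H$ and $\pi_{X\bullet H}$; $X\bullet(H\otimes H)$ the pushout of $\pi_X$ and $X\otimes\Delta$, with coprojections $X\bullet\Delta$ and $\pi_{X,\Delta}:X\otimes H\otimes H\to X\bullet(H\otimes H)$; $X\bullet(H\bullet H)$ the pushout of $\pi_{X,\Delta}$ and $\pi_X\otimes H$, with coprojections $\pi'_X$ and $\pi'_{X,\Delta}$. A geometric partial $H$-comodule is a datum such that (GP1) there is $X\bullet\varepsilon:X\bullet H\to X$ with $(X\bullet\varepsilon)\circ\rho_X=\mathrm{id}_X$ and $(X\bullet\varepsilon)\circ\pi_X=X\otimes\varepsilon$; (GP2) there is an isomorphism $\theta:X\bullet(H\bullet H)\to(X\bullet H)\bullet H$ with $\theta\circ\pi'_{X,\Delta}=\pi_{X\bullet H}$ and $(\rho_X\bullet H)\circ\rho_X=\theta\circ\pi'_X\circ(X\bullet\Delta)\circ\rho_X$. Morphisms $X\to X'$ are pairs $(f,f\bullet H)$ with $\rho_{X'}\circ f=(f\bullet H)\circ\rho_X$ and $\pi_{X'}\circ(f\otimes H)=(f\bullet H)\circ\pi_X$ (determined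 by $f$); category $\mathsf{PCom}^H$. A global comodule $(Y,\delta)$ gives $\mathcal I(Y)=(Y,Y\otimes H,\mathrm{id},\delta)$; a morphism $\mathcal I(Y)\to X$ is a morphism $g:Y\to X$ in $\mathcal C$ with $\pi_X\circ(g\otimes H)\circ\delta=\rho_X\circ g$. *)

Set Implicit Arguments.
Unset Strict Implicit.

Reserved Notation "g ∘ f" (at level 40, left associativity).
Reserved Notation "a ⊗ b" (at level 30, right associativity).
Reserved Notation "f <x> g" (at level 30, right associativity).

(** The paper treats C as strict; we keep explicit coherence isomorphisms
    (associator and unitors, satisfying naturality, pentagon and triangle),
    which is equivalent by Mac Lane's coherence/strictification theorem. *)
Record MonCat := {
  ob :> Type;
  hom : ob -> ob -> Type;
  idm : forall a, hom a a;
  comp : forall a b c, hom b c -> hom a b -> hom a c;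
  comp_idl : forall a b (f : hom a b), comp (idm b) f = f;
  comp_idr : forall a b (f : hom a b), comp f (idm a) = f;
  comp_assoc : forall a b c d (f : hom a b) (g : hom b c) (h : hom c d),
      comp h (comp g f) = comp (comp h g) f;
  tens : ob -> ob -> ob;
  tensm : forall a a' b b', hom a a' -> hom b b' -> hom (tens a b) (tens a' b');
  tensm_id : forall a b, tensm (idm a) (idm b) = idm (tens a b);
  tensm_comp : forall a a' a'' b b' b'' (f : hom a a') (f' : hom a' a'')
      (g : hom b b') (g' : hom b' b''),
      tensm (comp f' f) (comp g' g) = comp (tensm f' g') (tensm f g);
  unit : ob;
  assoc : forall a b c, hom (tens (tens a b) c) (tens a (tens b c));
  associ : forall a b c, hom (tens a (tens b c)) (tens (tens a b) c);
  assoc_iso1 : forall a b c, comp (associ a b c) (assoc a b c) = idm _;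
  assoc_iso2 : forall a b c, comp (assoc a b c) (associ a b c) = idm _;
  assoc_nat : forall a a' b b' c c' (f : hom a a') (g : hom b b') (h : hom c c'),
      comp (assoc a' b' c') (tensm (tensm f g) h)
      = comp (tensm f (tensm g h)) (assoc a b c);
  lunit : forall a, hom (tens unit a) a;
  luniti : forall a, hom a (tens unit a);
  lunit_iso1 : forall a, comp (luniti a) (lunit a) = idm _;
  lunit_iso2 : forall a, comp (lunit a) (luniti a) = idm _;
  lunit_nat : forall a b (f : hom a b),
      comp (lunit b) (tensm (idm unit) f) = comp f (lunit a);
  runit : forall a, hom (tens a unit) a;
  runiti : forall a, hom a (tens a unit);
  runit_iso1 : forall a, comp (runiti a) (runit a) = idm _;
  runit_iso2 : forall a, comp (runit a) (runiti a) = idm _;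
  runit_nat : forall a b (f : hom a b),
      comp (runit b) (tensm f (idm unit)) = comp f (runit a);
  pentagon : forall a b c d,
      comp (tensm (idm a) (assoc b c d))
           (comp (assoc a (tens b c) d) (tensm (assoc a b c) (idm d)))
      = comp (assoc a b (tens c d)) (assoc (tens a b) c d);
  triangle : forall a b,
      comp (tensm (idm a) (lunit b)) (assoc a unit b)
      = tensm (runit a) (idm b)
}.

Arguments hom {m} _ _.
Arguments idm {m} _.
Arguments comp {m a b c} _ _.
Arguments tens {m} _ _.
Arguments tensm {m a a' b b'} _ _.
Arguments unit {m}.
Arguments assoc {m} _ _ _.
Arguments associ {m} _ _ _.
Arguments lunit {m} _.
Arguments luniti {m} _.
Arguments runit {m} _.
Arguments runiti {m} _.

Notation "g ∘ f" := (comp g f).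
Notation "a ⊗ b" := (tens a b).
Notation "f <x> g" := (tensm f g).

Definition is_epi (C : MonCat) (a b : C) (f : hom a b) : Prop :=
  forall d (u v : hom b d), u ∘ f = v ∘ f -> u = v.

Definition is_iso (C : MonCat) (a b : C) (f : hom a b) : Prop :=
  exists g : hom b a, g ∘ f = idm a /\ f ∘ g = idm b.

Record Pushouts (C : MonCat) := {
  po : forall a b c : C, hom a b -> hom a c -> C;
  po_inl : forall a b c (f : hom a b) (g : hom a c), hom b (po f g);
  po_inr : forall a b c (f : hom a b) (g : hom a c), hom c (po f g);
  po_comm : forall a b c (f : hom a b) (g : hom a c),
      po_inl f g ∘ f = po_inr f g ∘ g;
  po_univ : forall a b c (f : hom a b) (g : hom a c) d (u : hom b d) (v : hom c d),
      u ∘ f = v ∘ g ->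
      exists! w : hom (po f g) d, w ∘ po_inl f g = u /\ w ∘ po_inr f g = v
}.
Arguments po {C} _ {a b c} _ _.
Arguments po_inl {C} _ {a b c} _ _.
Arguments po_inr {C} _ {a b c} _ _.

Record Coalg (C : MonCat) := {
  cH : C;
  cDelta : hom cH (cH ⊗ cH);
  ceps : hom cH unit;
  coassoc : assoc cH cH cH ∘ (cDelta <x> idm cH) ∘ cDelta = (idm cH <x> cDelta) ∘ cDelta;
  counit_l : lunit cH ∘ (ceps <x> idm cH) ∘ cDelta = idm cH;
  counit_r : runit cH ∘ (idm cH <x> ceps) ∘ cDelta = idm cH
}.
Arguments cH {C} _.
Arguments cDelta {C} _.
Arguments ceps {C} _.

Section Comod.
Context {C : MonCat} (K : Coalg C).
Local Notation H := (cH K).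
Local Notation Δ := (cDelta K).
Local Notation ε := (ceps K).

Definition is_comodule (Y : C) (δ : hom Y (Y ⊗ H)) : Prop :=
  assoc Y H H ∘ (δ <x> idm H) ∘ δ = (idm Y <x> Δ) ∘ δ /\
  runit Y ∘ (idm Y <x> ε) ∘ δ = idm Y.

Definition comod_hom (Y Y' : C) (δ : hom Y (Y ⊗ H)) (δ' : hom Y' (Y' ⊗ H))
  (f : hom Y Y') : Prop :=
  δ' ∘ f = (f <x> idm H) ∘ δ.

Definition cofree (X : C) : hom (X ⊗ H) ((X ⊗ H) ⊗ H) :=
  associ X H H ∘ (idm X <x> Δ).

Record PDatum := {
  pX : C;
  pXH : C;
  ppi : hom (pX ⊗ H) pXH;
  prho : hom pX pXH;
  ppi_epi : is_epi ppi
}.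

(** Geometric partial comodule: axioms (GP1) and (GP2), with the pushouts
    (X•H)•H, X•(H⊗H), X•(H•H) taken from the chosen pushouts. *)
Definition is_geometric (P : Pushouts C) (D : PDatum) : Prop :=
  let X := pX D in
  let pi := ppi D in
  let rho := prho D in
  let rhoH := po_inl P pi (rho <x> idm H) in
  let piXH := po_inr P pi (rho <x> idm H) in
  let XDel := po_inl P pi (idm X <x> Δ) in
  let piXDel := po_inr P pi (idm X <x> Δ) in
  let pi'X := po_inl P piXDel ((pi <x> idm H) ∘ associ X H H) in
  let pi'XDel := po_inr P piXDel ((pi <x> idm H) ∘ associ X H H) in
  (exists e : hom (pXH D) X,
      e ∘ rho = idm X /\ e ∘ pi = runit X ∘ (idm X <x> ε)) /\
  (exists θ : hom (po P piXDel ((pi <x> idm H) ∘ associ X H H))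
                  (po P pi (rho <x> idm H)),
      is_iso θ /\ θ ∘ pi'XDel = piXH /\
      rhoH ∘ rho = θ ∘ pi'X ∘ XDel ∘ rho).

Definition pcom_hom (D D' : PDatum) (f : hom (pX D) (pX D'))
  (fH : hom (pXH D) (pXH D')) : Prop :=
  prho D' ∘ f = fH ∘ prho D /\ ppi D' ∘ (f <x> idm H) = fH ∘ ppi D.

Lemma idm_epi (a : C) : is_epi (idm a).
Proof. intros d u v E. rewrite !comp_idr in E. exact E. Qed.

Definition Iof (Y : C) (δ : hom Y (Y ⊗ H)) : PDatum :=
  {| pX := Y; pXH := Y ⊗ H; ppi := idm (Y ⊗ H); prho := δ;
     ppi_epi := @idm_epi (Y ⊗ H) |}.

Definition pcomI_hom (Y : C) (δ : hom Y (Y ⊗ H)) (D : PDatum) (g : hom Y (pX D)) : Prop :=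
  exists gH : hom (Y ⊗ H) (pXH D), @pcom_hom (Iof δ) D g gH.

Definition eq_set (Y : C) (δ : hom Y (Y ⊗ H)) (D : PDatum) (f : hom Y (pX D ⊗ H)) : Prop :=
  comod_hom δ (cofree (pX D)) f /\
  (prho D <x> idm H) ∘ f = (ppi D <x> idm H) ∘ associ (pX D) H H ∘ (idm (pX D) <x> Δ) ∘ f.

Definition Phi (Y : C) (δ : hom Y (Y ⊗ H)) (X : C) (g : hom Y X) : hom Y (X ⊗ H) :=
  (g <x> idm H) ∘ δ.

Definition Psi (Y X : C) (f : hom Y (X ⊗ H)) : hom Y X :=
  runit X ∘ (idm X <x> ε) ∘ f.

End Comod.

Arguments is_comodule {C K Y} δ.
Arguments comod_hom {C K Y Y'} δ δ' f.
Arguments pcom_hom {C K} D D' f fH.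
Arguments pcomI_hom {C K Y} δ D g.
Arguments eq_set {C K Y} δ D f.
Arguments Phi {C K Y} δ {X} g.
Arguments Psi {C K Y X} f.
Arguments is_geometric {C K} P D.


(* Phi and Psi are the two halves of the cofree-comodule adjunction
   Hom_C(Y, X) ≅ Hom_{Com^H}(Y, X ⊗ H): Psi ∘ Phi = id is the counit law of
   δ, and Phi ∘ Psi = id is the counit law of H inside the cofree comodule.
   Under this bijection the condition ρ_X g = π_X (g ⊗ H) δ describing the
   morphisms I(Y) -> X becomes the equalizing condition on f, by applying
   Phi (i.e. (- ⊗ H) ∘ δ) in one direction and Psi (i.e. X ⊗ ε) in the other. *)

Section Monoidal.
Context {C : MonCat}.

Lemma comp_congr_post {a b c d : C} {k : hom c d} {g : hom b c} {f : hom a b}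
  {h : hom a c} : g ∘ f = h -> k ∘ g ∘ f = k ∘ h.
Proof. intros E. rewrite <- comp_assoc, E. reflexivity. Qed.

Lemma tensm_compl {a a' a'' b : C} (f : hom a a') (f' : hom a' a'') :
  (f' ∘ f) <x> idm b = (f' <x> idm b) ∘ (f <x> idm b).
Proof. rewrite <- tensm_comp, comp_idl. reflexivity. Qed.

Lemma tensm_compr {a b b' b'' : C} (g : hom b b') (g' : hom b' b'') :
  idm a <x> (g' ∘ g) = (idm a <x> g') ∘ (idm a <x> g).
Proof. rewrite <- tensm_comp, comp_idl. reflexivity. Qed.

Lemma tensm_commute {a a' b b' : C} (f : hom a a') (g : hom b b') :
  (idm a' <x> g) ∘ (f <x> idm b) = (f <x> idm b') ∘ (idm a <x> g).
Proof. rewrite <- !tensm_comp, !comp_idl, !comp_idr. reflexivity. Qed.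

Lemma associ_nat {a a' b b' c c' : C} (f : hom a a') (g : hom b b') (h : hom c c') :
  associ a' b' c' ∘ (f <x> (g <x> h)) = ((f <x> g) <x> h) ∘ associ a b c.
Proof.
  rewrite <- (comp_idr (associ a' b' c' ∘ _)), <- (assoc_iso2 a b c).
  rewrite !comp_assoc, <- (comp_assoc _ (f <x> (g <x> h))), <- assoc_nat.
  rewrite !comp_assoc, assoc_iso1, comp_idl. reflexivity.
Qed.

Lemma triangle_inv (a b : C) :
  (runit a <x> idm b) ∘ associ a unit b = idm a <x> lunit b.
Proof. rewrite <- triangle, <- comp_assoc, assoc_iso2, comp_idr. reflexivity. Qed.

End Monoidal.

Ltac crewrite E :=
  first [ rewrite (comp_congr_post E) | rewrite E ]; repeat rewrite comp_assoc.

Section Comodules.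
Context {C : MonCat} {K : Coalg C}.
Local Notation H := (cH K).
Local Notation ε := (ceps K).

Lemma comod_hom_comp {Y1 Y2 Y3 : C} {δ1 : hom Y1 (Y1 ⊗ H)} {δ2 : hom Y2 (Y2 ⊗ H)}
  {δ3 : hom Y3 (Y3 ⊗ H)} {f : hom Y1 Y2} {g : hom Y2 Y3} :
  comod_hom δ1 δ2 f -> comod_hom δ2 δ3 g -> comod_hom δ1 δ3 (g ∘ f).
Proof.
  unfold comod_hom. intros Ef Eg.
  rewrite comp_assoc, Eg, <- comp_assoc, Ef, tensm_compl, comp_assoc. reflexivity.
Qed.

Lemma coaction_comod_hom {Y : C} {δ : hom Y (Y ⊗ H)} :
  is_comodule δ -> comod_hom δ (cofree K Y) δ.
Proof.
  intros [Hcoassoc _]. unfold comod_hom, cofree.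
  rewrite <- comp_assoc, <- Hcoassoc, !comp_assoc, assoc_iso1, comp_idl.
  reflexivity.
Qed.

Lemma cofree_comod_hom {X X' : C} (k : hom X X') :
  comod_hom (cofree K X) (cofree K X') (k <x> idm H).
Proof.
  unfold comod_hom, cofree.
  rewrite <- comp_assoc, tensm_commute, <- tensm_id, comp_assoc, associ_nat.
  rewrite <- comp_assoc. reflexivity.
Qed.

Lemma Phi_comod_hom {Y X : C} (δ : hom Y (Y ⊗ H)) (g : hom Y X) :
  is_comodule δ -> comod_hom δ (cofree K X) (Phi δ g).
Proof.
  intros HY. exact (comod_hom_comp (coaction_comod_hom HY) (cofree_comod_hom g)).
Qed.

Lemma Phi_comp {Y X X' : C} (δ : hom Y (Y ⊗ H)) (k : hom X X') (g : hom Y X) :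
  Phi δ (k ∘ g) = (k <x> idm H) ∘ Phi δ g.
Proof. unfold Phi. rewrite tensm_compl, comp_assoc. reflexivity. Qed.

Lemma Phi_precomp {Y Y' X : C} (δ : hom Y (Y ⊗ H)) (δ' : hom Y' (Y' ⊗ H))
  (h : hom Y' Y) (g : hom Y X) :
  comod_hom δ' δ h -> Phi δ' (g ∘ h) = Phi δ g ∘ h.
Proof.
  unfold comod_hom, Phi. intros Eh.
  rewrite tensm_compl, <- !comp_assoc, Eh. reflexivity.
Qed.

Lemma Psi_comp {Y X X' : C} (k : hom X X') (f : hom Y (X ⊗ H)) :
  Psi ((k <x> idm H) ∘ f) = k ∘ Psi f.
Proof.
  unfold Psi. rewrite !comp_assoc.
  crewrite (tensm_commute k ε). crewrite (runit_nat k). reflexivity.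
Qed.

Lemma Psi_precomp {Y Y' X : C} (f : hom Y (X ⊗ H)) (h : hom Y' Y) :
  Psi (f ∘ h) = Psi f ∘ h.
Proof. unfold Psi. apply comp_assoc. Qed.

Lemma Psi_Phi {Y X : C} (δ : hom Y (Y ⊗ H)) (g : hom Y X) :
  is_comodule δ -> Psi (Phi δ g) = g.
Proof.
  intros [_ Hcounit]. unfold Phi.
  rewrite Psi_comp. unfold Psi. rewrite Hcounit, comp_idr. reflexivity.
Qed.

Lemma cofree_counitl (X : C) :
  ((runit X ∘ (idm X <x> ε)) <x> idm H) ∘ cofree K X = idm (X ⊗ H).
Proof.
  unfold cofree. rewrite tensm_compl, comp_assoc.
  crewrite (eq_sym (associ_nat (idm X) ε (idm H))).
  crewrite (triangle_inv X H).
  rewrite <- !tensm_compr, counit_l, tensm_id. reflexivity.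
Qed.

Lemma Phi_Psi {Y X : C} (δ : hom Y (Y ⊗ H)) (f : hom Y (X ⊗ H)) :
  comod_hom δ (cofree K X) f -> Phi δ (Psi f) = f.
Proof.
  unfold comod_hom. intros Hf. unfold Psi.
  rewrite Phi_comp. unfold Phi at 1.
  rewrite <- Hf, comp_assoc, cofree_counitl, comp_idl. reflexivity.
Qed.

Lemma pcomI_homP {Y : C} (δ : hom Y (Y ⊗ H)) (D : PDatum K) (g : hom Y (pX D)) :
  pcomI_hom δ D g <-> prho D ∘ g = ppi D ∘ Phi δ g.
Proof.
  unfold pcomI_hom, pcom_hom, Phi. simpl. split.
  - intros [gH [Erho Epi]]. rewrite comp_idr in Epi.
    rewrite Erho, <- Epi, comp_assoc. reflexivity.
  - intros E. exists (ppi D ∘ (g <x> idm H)). split.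
    + rewrite E. apply comp_assoc.
    + symmetry. apply comp_idr.
Qed.

Lemma Phi_eq_set {Y : C} (δ : hom Y (Y ⊗ H)) (D : PDatum K) (g : hom Y (pX D)) :
  is_comodule δ -> pcomI_hom δ D g -> eq_set δ D (Phi δ g).
Proof.
  intros HY Hg. apply pcomI_homP in Hg.
  pose proof (Phi_comod_hom δ g HY) as Hc.
  split; [exact Hc |].
  rewrite <- (comp_assoc _ (associ _ _ _)), <- comp_assoc. fold (cofree K (pX D)).
  rewrite Hc. fold (Phi δ (Phi δ g)).
  rewrite <- !Phi_comp, Hg. reflexivity.
Qed.

Lemma Psi_pcomI_hom {Y : C} (δ : hom Y (Y ⊗ H)) (D : PDatum K)
  (f : hom Y (pX D ⊗ H)) :
  is_comodule δ -> eq_set δ D f -> pcomI_hom δ D (Psi f).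
Proof.
  intros HY [Hc Heq]. apply pcomI_homP.
  rewrite Phi_Psi by exact Hc.
  (* ρ ∘ Psi f = Psi ((ρ ⊗ H) ∘ f) = π ∘ Psi (cofree f) = π ∘ Psi (Phi δ f) = π ∘ f *)
  rewrite <- Psi_comp, Heq, <- !comp_assoc, Psi_comp, comp_assoc.
  fold (cofree K (pX D)). rewrite Hc. fold (Phi δ f).
  rewrite Psi_Phi by exact HY. reflexivity.
Qed.

End Comodules.

Theorem lemma3p3 (C : MonCat) (P : Pushouts C) (K : Coalg C)
  (D : PDatum K) (HD : is_geometric P D)
  (Y : C) (δ : hom Y (Y ⊗ cH K)) (HY : is_comodule δ) :
  (* the two maps land in the right sets *)
  (forall g : hom Y (pX D), pcomI_hom δ D g -> eq_set δ D (Phi δ g)) /\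
  (forall f : hom Y (pX D ⊗ cH K), eq_set δ D f -> pcomI_hom δ D (Psi f)) /\
  (* they are mutually inverse *)
  (forall g : hom Y (pX D), pcomI_hom δ D g -> Psi (Phi δ g) = g) /\
  (forall f : hom Y (pX D ⊗ cH K), eq_set δ D f -> Phi δ (Psi f) = f) /\
  (* naturality in Y *)
  (forall (Y' : C) (δ' : hom Y' (Y' ⊗ cH K)) (h : hom Y' Y),
      is_comodule δ' -> comod_hom δ' δ h ->
      (forall g : hom Y (pX D), pcomI_hom δ D g -> Phi δ' (g ∘ h) = Phi δ g ∘ h) /\
      (forall f : hom Y (pX D ⊗ cH K), eq_set δ D f -> Psi (f ∘ h) = Psi f ∘ h)) /\
  (* naturality in X *)
  (forall (D' : PDatum K) (k : hom (pX D) (pX D')) (kH : hom (pXH D) (pXH D')),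
      is_geometric P D' -> pcom_hom D D' k kH ->
      (forall g : hom Y (pX D), pcomI_hom δ D g ->
          Phi δ (k ∘ g) = (k <x> idm (cH K)) ∘ Phi δ g) /\
      (forall f : hom Y (pX D ⊗ cH K), eq_set δ D f ->
          Psi ((k <x> idm (cH K)) ∘ f) = k ∘ Psi f)).
Proof.
  split; [| split; [| split; [| split; [| split]]]].
  - intros g Hg. exact (Phi_eq_set δ D g HY Hg).
  - intros f Hf. exact (Psi_pcomI_hom δ D f HY Hf).
  - intros g _. exact (Psi_Phi δ g HY).
  - intros f [Hc _]. exact (Phi_Psi δ f Hc).
  - intros Y' δ' h _ Hh. split.
    + intros g _. exact (Phi_precomp δ δ' h g Hh).
    + intros f _. apply Psi_precomp.
  - intros D' k kH _ _. split.
    + intros g _. apply Phi_comp.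
    + intros f _. apply Psi_comp.
Qed.
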